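(* Let $(\boldsymbol{\beta},\mathbf{u})$ be a domain index, i.e. $(\boldsymbol{\beta},\mathbf{u}) \in \operatorname{argmax}_{\boldsymbol{\beta}',\mathbf{u}'} \big[I_{\mathbf{x}}(\boldsymbol{\beta}',\mathbf{u}') + I_y(\boldsymbol{\beta}')\big]$, the argmax being over domain-associated variables $\boldsymbol{\beta}'$ and data-associated variables $\mathbf{u}'$. Then $I_{\mathbf{x}}(\boldsymbol{\beta},\mathbf{u}) = H(\mathbf{x})$ and $I_y(\boldsymbol{\beta}) = I(y;\mathbf{x})$.
   Context: Data $\mathbf{x}$, label $y$ and a domain variable are given random variables. A domain-associated variable $\boldsymbol{\beta}$ is one that takes the same value for all data in a given domain (this includes constants); a data-associated variable $\mathbf{u}$ may take a different value for each data point (this includes constants). A data encoding $\mathbf{z}$ is a random variable obtained from $\mathbf{x}$ through a conditional distribution $q(\mathbf{z}\mid\mathbf{x})$ (so $\mathbf{z}$ is conditionally independent of all other variables given $\mathbf{x}$; e.g. $\mathbf{z}=\mathbf{x}$ is allowed). Data orthogonal information: $I_{\mathbf{x}}(\boldsymbol{\beta},\mathbf{u}) := \max_{\mathbf{z}:\,\mathbf{z}\perp\!\!\!\perp\boldsymbol{\beta}} I(\mathbf{x};\mathbf{u},\boldsymbol{\beta},\mathbf{z})$; label orthogonal information: $I_y(\boldsymbol{\beta}) := \max_{\mathbf{z}:\,\mathbf{z}\perp\!\!\!\perp\boldsymbol{\beta}} I(y;\mathbf{z})$, the maxima being over data encodings $\mathbf{z}$ independent of $\boldsymbol{\beta}$.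 $H(\mathbf{x})$ is the (Shannon) entropy of $\mathbf{x}$; the variables are taken discrete so that $I(\mathbf{x};\mathbf{x})=H(\mathbf{x})$. *)

From HB Require Import structures.
From mathcomp Require Import all_boot all_order all_algebra.
From mathcomp Require Import reals exp.
Set Implicit Arguments. Unset Strict Implicit. Unset Printing Implicit Defensive.
Import Order.TTheory GRing.Theory Num.Theory.
Local Open Scope ring_scope.

Definition is_pmf (R : realType) (T : finType) (p : T -> R) : Prop :=
  (forall t, 0 <= p t) /\ \sum_(t : T) p t = 1.

Definition entropy (R : realType) (T : finType) (p : T -> R) : R :=
  - \sum_(t : T) (if p t == 0 then 0 else p t * ln (p t)).

Definition mutinfo (R : realType) (A B : finType) (P : A -> B -> R) : R :=
  \sum_(a : A) \sum_(b : B)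
    (if P a b == 0 then 0
     else P a b * ln (P a b / ((\sum_(b' : B) P a b') * (\sum_(a' : A) P a' b)))).

(* The setting: data x : X, label y : Y, domain d : D with joint pmf p x y d.
   A domain-associated variable is beta = f d for f : D -> Bt (constants included).
   A data-associated variable u is given by a conditional pmf qu x y d u
   (arbitrary dependence on the data point, constants included).
   A data encoding z is given by a conditional pmf qz x z. The joint law of
   (x,y,d,u,z) is p x y d * qu x y d u * qz x z, so z is conditionally
   independent of everything else given x. *)

Definition px (R : realType) (X Y D : finType) (p : X -> Y -> D -> R) (x : X) : R :=
  \sum_(y : Y) \sum_(d : D) p x y d.

Definition pyx (R : realType) (X Y D : finType) (p : X -> Y -> D -> R) (y : Y) (x : X) : R :=
  \sum_(d : D) p x y d.

Definition is_encoding (R : realType) (X Z : finType) (qz : X -> Z -> R) : Prop :=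
  forall x, is_pmf (qz x).

Definition pzb (R : realType) (X Y D Bt Z : finType) (p : X -> Y -> D -> R)
  (f : D -> Bt) (qz : X -> Z -> R) (z : Z) (b : Bt) : R :=
  \sum_(x : X) \sum_(y : Y) \sum_(d : D) (if f d == b then p x y d * qz x z else 0).

Definition indep_zb (R : realType) (X Y D Bt Z : finType) (p : X -> Y -> D -> R)
  (f : D -> Bt) (qz : X -> Z -> R) : Prop :=
  forall z b, pzb p f qz z b =
    (\sum_(b' : Bt) pzb p f qz z b') * (\sum_(z' : Z) pzb p f qz z' b).

Definition px_ubz (R : realType) (X Y D Bt U Z : finType) (p : X -> Y -> D -> R)
  (f : D -> Bt) (qu : X -> Y -> D -> U -> R) (qz : X -> Z -> R)
  (x : X) (w : U * Bt * Z) : R :=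
  \sum_(y : Y) \sum_(d : D)
    (if f d == w.1.2 then p x y d * qu x y d w.1.1 * qz x w.2 else 0).

Definition pyz (R : realType) (X Y D Z : finType) (p : X -> Y -> D -> R)
  (qz : X -> Z -> R) (y : Y) (z : Z) : R :=
  \sum_(x : X) \sum_(d : D) p x y d * qz x z.

Definition is_Ix (R : realType) (X Y D Bt U : finType) (p : X -> Y -> D -> R)
  (f : D -> Bt) (qu : X -> Y -> D -> U -> R) (v : R) : Prop :=
  (exists (Z : finType) (qz : X -> Z -> R),
      [/\ is_encoding qz, indep_zb p f qz & v = mutinfo (px_ubz p f qu qz)]) /\
  (forall (Z : finType) (qz : X -> Z -> R),
      is_encoding qz -> indep_zb p f qz -> mutinfo (px_ubz p f qu qz) <= v).

Definition is_Iy (R : realType) (X Y D Bt : finType) (p : X -> Y -> D -> R)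
  (f : D -> Bt) (v : R) : Prop :=
  (exists (Z : finType) (qz : X -> Z -> R),
      [/\ is_encoding qz, indep_zb p f qz & v = mutinfo (pyz p qz)]) /\
  (forall (Z : finType) (qz : X -> Z -> R),
      is_encoding qz -> indep_zb p f qz -> mutinfo (pyz p qz) <= v).

Definition is_data_var (R : realType) (X Y D U : finType)
  (qu : X -> Y -> D -> U -> R) : Prop :=
  forall x y d, is_pmf (qu x y d).

Definition is_domain_index (R : realType) (X Y D Bt U : finType)
  (p : X -> Y -> D -> R) (f : D -> Bt) (qu : X -> Y -> D -> U -> R) : Prop :=
  exists vx vy : R,
    [/\ is_Ix p f qu vx, is_Iy p f vy &
      forall (Bt' U' : finType) (f' : D -> Bt') (qu' : X -> Y -> D -> U' -> R),
        is_data_var qu' ->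
        forall vx' vy' : R, is_Ix p f' qu' vx' -> is_Iy p f' vy' ->
          vx' + vy' <= vx + vy].

(* Both orthogonal informations are bounded by the unconstrained quantities:
   I(x; u, beta, z) <= H(x) because mutual information never exceeds the
   entropy of either variable, and I(y; z) <= I(y; x) by the data processing
   inequality, since z is obtained from x through a channel.  Both bounds are
   attained simultaneously by the constant domain variable, the data variable
   u = x and the encoding z = x, and a constant is independent of every
   encoding.  A maximiser of I_x + I_y therefore reaches both bounds. *)
From HB Require Import structures.
From mathcomp Require Import all_boot all_order all_algebra.
From mathcomp Require Import reals exp.
From mathcomp Require Import ring lra.
Import Order.TTheory GRing.Theory Num.Theory.
Local Open Scope ring_scope.

Section Sums.
Context {R : realType}.

Lemma le_sum_term {I : finType} {F : I -> R} (i : I) :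
  (forall j, 0 <= F j) -> F i <= \sum_j F j.
Proof. by move=> F_ge0; rewrite (bigD1 i) //= lerDl sumr_ge0. Qed.

Lemma lt_sum_term {I : finType} {F : I -> R} (i : I) :
  (forall j, 0 <= F j) -> 0 < F i -> 0 < \sum_j F j.
Proof. by move=> F_ge0 Fi_gt0; apply: lt_le_trans Fi_gt0 (le_sum_term i F_ge0). Qed.

Lemma sum_pair {I J : finType} (F : I * J -> R) :
  \sum_w F w = \sum_i \sum_j F (i, j).
Proof. by rewrite pair_bigA; apply: eq_bigr => -[]. Qed.

Lemma sum_channel {I Z : finType} (F : I -> R) (q : I -> Z -> R) :
  (forall i, \sum_z q i z = 1) -> \sum_z \sum_i F i * q i z = \sum_i F i.
Proof.
move=> q_sum1; rewrite exchange_big; apply: eq_bigr => i _.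
by rewrite -mulr_sumr q_sum1 mulr1.
Qed.

End Sums.

Section LogSumInequality.
Context {R : realType}.

Lemma ln_le_subr1 (t : R) : 0 < t -> ln t <= t - 1.
Proof.
move=> t_gt0; have := @le_ln1Dx R (t - 1).
by rewrite [1 + _]addrC subrK; apply; lra.
Qed.

Definition kl_term (a b : R) : R := if a == 0 then 0 else a * ln (a / b).

Lemma kl_termMr (a b c : R) : kl_term (a * c) (b * c) = kl_term a b * c.
Proof.
rewrite /kl_term; have [->|c_neq0] := eqVneq c 0; first by rewrite !mulr0 eqxx.
rewrite mulf_eq0 (negbTE c_neq0) orbF; case: eqP => _; first by rewrite mul0r.
by rewrite invfM mulrACA divff // mulr1 mulrAC.
Qed.

(* Tangent-line bound: [ln (b c / a) <= b c / a - 1]. *)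
Lemma kl_term_ge (a b c : R) : 0 < c -> 0 <= a -> 0 <= b -> (a != 0 -> 0 < b) ->
  a * ln c + a - b * c <= kl_term a b.
Proof.
move=> c_gt0 a_ge0 b_ge0 ab_gt0; rewrite /kl_term.
have [->|a_neq0] := eqVneq a 0.
  by rewrite mul0r add0r sub0r oppr_le0 mulr_ge0 // ltW.
have a_gt0 : 0 < a by rewrite lt_def a_neq0.
have b_gt0 := ab_gt0 a_neq0.
have ln_c : ln c = ln (a / b) + ln (b * c / a).
  rewrite -lnM ?posrE ?divr_gt0 ?mulr_gt0 //; congr ln.
  by field; rewrite !gt_eqF.
have : a * ln (b * c / a) <= b * c - a.
  have -> : b * c - a = a * (b * c / a - 1) by field; rewrite gt_eqF.
  apply: ler_wpM2l; first exact: ltW.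
  by apply: ln_le_subr1; rewrite !(divr_gt0, mulr_gt0).
by rewrite ln_c mulrDr; lra.
Qed.

Lemma log_sum_ineq (I : finType) (a b : I -> R) :
  (forall i, 0 <= a i) -> (forall i, 0 <= b i) -> (forall i, a i != 0 -> 0 < b i) ->
  kl_term (\sum_i a i) (\sum_i b i) <= \sum_i kl_term (a i) (b i).
Proof.
move=> a_ge0 b_ge0 ab_gt0; rewrite {1}/kl_term.
have [A_eq0|A_neq0] := eqVneq (\sum_i a i) 0.
  apply: sumr_ge0 => i _.
  by rewrite /kl_term (psumr_eq0P (fun j _ => a_ge0 j) A_eq0) ?eqxx.
have /eqP/(psumr_neq0P (fun j _ => a_ge0 j))[i /= ai_gt0] := A_neq0.
have A_gt0 : 0 < \sum_i a i by rewrite lt_def A_neq0 sumr_ge0.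
have B_gt0 : 0 < \sum_i b i by rewrite (lt_sum_term i) // ab_gt0 // gt_eqF.
set c := (\sum_i a i) / (\sum_i b i).
have c_gt0 : 0 < c by rewrite divr_gt0.
have term_ge i := kl_term_ge _ _ _ c_gt0 (a_ge0 i) (b_ge0 i) (@ab_gt0 i).
apply: le_trans (ler_sum _ (fun i _ => term_ge i)).
rewrite !big_split /= sumrN -!mulr_suml.
have -> : (\sum_i b i) * c = \sum_i a i by rewrite /c; field; rewrite gt_eqF.
by rewrite addrK.
Qed.

End LogSumInequality.

Section MutualInformation.
Context {R : realType} {A B : finType}.

Lemma mutinfoE (P : A -> B -> R) : mutinfo P =
  \sum_a \sum_b kl_term (P a b) ((\sum_b' P a b') * (\sum_a' P a' b)).
Proof. by []. Qed.

Lemma eq_mutinfo {P P' : A -> B -> R} : P =2 P' -> mutinfo P = mutinfo P'.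
Proof.
move=> eqP'; rewrite !mutinfoE; apply: eq_bigr => a _; apply: eq_bigr => b _.
by rewrite eqP'; congr (kl_term _ (_ * _)); apply: eq_bigr => *; rewrite eqP'.
Qed.

Lemma eq_entropy {m m' : A -> R} : m =1 m' -> entropy m = entropy m'.
Proof. by move=> eqm; congr (- _); apply: eq_bigr => a _; rewrite eqm. Qed.

Lemma mutinfo_le_entropy (P : A -> B -> R) :
  (forall a b, 0 <= P a b) -> mutinfo P <= entropy (fun a => \sum_b P a b).
Proof.
move=> P_ge0; rewrite mutinfoE /entropy -sumrN; apply: ler_sum => a _.
set Pa := \sum_b P a b.
have -> : (if Pa == 0 then 0 else Pa * ln Pa) = Pa * ln Pa.
  by case: eqP => // ->; rewrite mul0r.
rewrite /Pa mulr_suml -sumrN; apply: ler_sum => b _; rewrite /kl_term.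
have [->|Pab_neq0] := eqVneq (P a b) 0; first by rewrite mul0r oppr0.
have Pab_gt0 : 0 < P a b by rewrite lt_def Pab_neq0 P_ge0.
have Pa_gt0 : 0 < \sum_b' P a b' := lt_sum_term b (P_ge0 a) Pab_gt0.
have Pb_gt0 : 0 < \sum_a' P a' b := lt_sum_term a (P_ge0^~ b) Pab_gt0.
have : ln (P a b) <= ln (\sum_a' P a' b).
  by rewrite ler_ln ?posrE // (le_sum_term a (P_ge0^~ b)).
rewrite -mulrN ln_div ?posrE ?mulr_gt0 // lnM ?posrE // => ln_le.
by apply: ler_wpM2l; [exact: ltW | lra].
Qed.

Lemma mutinfo_graph (m : A -> R) (g : A -> B) : (forall a, 0 <= m a) ->
  injective g -> mutinfo (fun a b => if b == g a then m a else 0) = entropy m.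
Proof.
move=> m_ge0 g_inj; rewrite mutinfoE /entropy -sumrN; apply: eq_bigr => a _.
rewrite (bigD1 (g a)) //= [X in _ + X]big1 => [|b /negbTE gb]; last first.
  by rewrite gb /kl_term eqxx.
rewrite eqxx addr0 -!big_mkcond big_pred1_eq.
rewrite (eq_bigl (pred1 a)) => [|a'] /=; last by rewrite inj_eq // eq_sym.
rewrite big_pred1_eq /kl_term; case: eqP => [_|/eqP ma_neq0]; first by rewrite oppr0.
have ma_gt0 : 0 < m a by rewrite lt_def ma_neq0 m_ge0.
by rewrite invfM mulrA divff // mul1r lnV ?posrE // mulrN.
Qed.

End MutualInformation.

Lemma mutinfo_channel_le (R : realType) (A B C : finType) (J : A -> B -> R)
    (q : B -> C -> R) :
  (forall a b, 0 <= J a b) -> (forall b, is_pmf (q b)) ->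
  mutinfo (fun a c => \sum_b J a b * q b c) <= mutinfo J.
Proof.
move=> J_ge0 q_pmf; have q_ge0 b c : 0 <= q b c := (q_pmf b).1 c.
rewrite !mutinfoE; apply: ler_sum => a _.
set row := \sum_b' J a b'; set col := fun b => \sum_a' J a' b.
have row_gt0 b : J a b != 0 -> 0 < row.
  by move=> Jab; apply: (lt_sum_term b (J_ge0 a)); rewrite lt_def Jab J_ge0.
have col_gt0 b : J a b != 0 -> 0 < col b.
  by move=> Jab; apply: (lt_sum_term a (J_ge0^~ b)); rewrite lt_def Jab J_ge0.
have -> : \sum_c' \sum_b J a b * q b c' = row.
  by rewrite sum_channel // => b; case: (q_pmf b).
rewrite -[X in _ <= X](sum_channel _ q (fun b => (q_pmf b).2)); apply: ler_sum => c _.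
have col_c : \sum_a' \sum_b J a' b * q b c = \sum_b col b * q b c.
  by rewrite exchange_big; apply: eq_bigr => b _; rewrite mulr_suml.
rewrite col_c mulr_sumr; under [X in kl_term _ X]eq_bigr do rewrite mulrA.
under [X in _ <= X]eq_bigr do rewrite -kl_termMr.
apply: log_sum_ineq => b.
- by rewrite mulr_ge0.
- by rewrite !mulr_ge0 ?sumr_ge0.
- rewrite mulf_eq0 negb_or => /andP[Jab qbc].
  by rewrite !mulr_gt0 ?(row_gt0 b) ?(col_gt0 b) // lt_def qbc q_ge0.
Qed.

Section OrthogonalInformation.
Context {R : realType} {X Y D : finType} {p : X -> Y -> D -> R}.
Hypothesis p_ge0 : forall x y d, 0 <= p x y d.

Section DataEncoding.
Context {Bt U Z : finType} {f : D -> Bt} {qu : X -> Y -> D -> U -> R}.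
Context {qz : X -> Z -> R}.
Hypotheses (qu_pmf : is_data_var qu) (qz_pmf : is_encoding qz).

Lemma px_ubz_ge0 x w : 0 <= px_ubz p f qu qz x w.
Proof.
apply: sumr_ge0 => y _; apply: sumr_ge0 => d _.
by case: ifP => _ //; rewrite !mulr_ge0 // ?(qu_pmf x y d).1 ?(qz_pmf x).1.
Qed.

Lemma sum_px_ubz x : \sum_w px_ubz p f qu qz x w = px p x.
Proof.
rewrite /px_ubz exchange_big; apply: eq_bigr => y _.
rewrite exchange_big; apply: eq_bigr => d _; rewrite !sum_pair /=.
rewrite -[RHS]mulr1 -(qu_pmf x y d).2 mulr_sumr; apply: eq_bigr => u _.
rewrite (bigD1 (f d)) //= [X in _ + X]big1 => [|b /negbTE fd_b]; last first.
  by apply: big1 => z _; rewrite eq_sym fd_b.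
by rewrite eqxx addr0 -mulr_sumr (qz_pmf x).2 mulr1.
Qed.

Lemma mutinfo_px_ubz_le : mutinfo (px_ubz p f qu qz) <= entropy (px p).
Proof.
rewrite -(eq_entropy sum_px_ubz).
by apply: mutinfo_le_entropy; exact: px_ubz_ge0.
Qed.

End DataEncoding.

Lemma pyz_channel {Z : finType} (qz : X -> Z -> R) y z :
  pyz p qz y z = \sum_x pyx p y x * qz x z.
Proof. by apply: eq_bigr => x _; rewrite mulr_suml. Qed.

Lemma mutinfo_pyz_le {Z : finType} (qz : X -> Z -> R) :
  is_encoding qz -> mutinfo (pyz p qz) <= mutinfo (pyx p).
Proof.
move=> qz_pmf; rewrite (eq_mutinfo (pyz_channel qz)).
by apply: mutinfo_channel_le => // y x; apply: sumr_ge0 => d _.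
Qed.

Lemma is_Ix_le_entropy {Bt U : finType} {f : D -> Bt}
    {qu : X -> Y -> D -> U -> R} {v : R} :
  is_data_var qu -> is_Ix p f qu v -> v <= entropy (px p).
Proof. by move=> qu_pmf [[Z [qz [qz_pmf _ ->]]] _]; exact: mutinfo_px_ubz_le. Qed.

Lemma is_Iy_le_mutinfo {Bt : finType} {f : D -> Bt} {v : R} :
  is_Iy p f v -> v <= mutinfo (pyx p).
Proof. by move=> [[Z [qz [qz_pmf _ ->]]] _]; exact: mutinfo_pyz_le. Qed.

Hypothesis p_sum1 : \sum_x px p x = 1.

Lemma indep_zb_const {Z : finType} (qz : X -> Z -> R) :
  is_encoding qz -> indep_zb p (fun=> tt) qz.
Proof.
move=> qz_pmf z []; rewrite (big_pred1 tt) => [|[]] //.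
suff -> : \sum_z' pzb p (fun=> tt) qz z' tt = 1 by rewrite mulr1.
rewrite -p_sum1 -(sum_channel _ qz (fun x => (qz_pmf x).2)); apply: eq_bigr => z' _.
apply: eq_bigr => x _; rewrite /px mulr_suml; apply: eq_bigr => y _.
by rewrite mulr_suml.
Qed.

Definition identity_channel {T : finType} (t t' : T) : R := if t' == t then 1 else 0.

Lemma identity_channel_pmf {T : finType} (t : T) : is_pmf (identity_channel t).
Proof.
split=> [t'|]; first by rewrite /identity_channel; case: ifP.
by rewrite -big_mkcond big_pred1_eq.
Qed.

Lemma is_Ix_const_identity :
  is_Ix p (fun=> tt) (fun x _ _ => identity_channel x) (entropy (px p)).
Proof.
split=> [|Z qz qz_pmf _]; last first.
  by apply: mutinfo_px_ubz_le => // x y d; exact: identity_channel_pmf.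
have const_pmf : is_encoding (fun (_ : X) (_ : unit) => 1 : R).
  by move=> x; split=> [_|]; rewrite ?sumr_const ?card_unit.
exists unit, (fun _ _ => 1); split => //; first exact: indep_zb_const.
rewrite -(mutinfo_graph _ (fun x => (x, tt, tt))) => [||x x' [] //].
  apply: eq_mutinfo => x [[u []] []]; rewrite /px_ubz /identity_channel /=.
  rewrite !xpair_eqE !eqxx !andbT; case: eqP => _.
    by apply: eq_bigr => y _; apply: eq_bigr => d _; rewrite !mulr1.
  by rewrite big1 // => y _; rewrite big1 // => d _; rewrite mulr0 mul0r.
by move=> x; apply: sumr_ge0 => y _; apply: sumr_ge0.
Qed.

Lemma pyz_identity : pyz p (@identity_channel X) =2 pyx p.
Proof.
move=> y z; rewrite pyz_channel (bigD1 z) //= /identity_channel eqxx mulr1.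
by rewrite big1 ?addr0 // => x; rewrite eq_sym => /negbTE ->; rewrite mulr0.
Qed.

Lemma is_Iy_const : is_Iy p (fun=> tt) (mutinfo (pyx p)).
Proof.
split=> [|Z qz qz_pmf _]; last exact: mutinfo_pyz_le.
exists X, (@identity_channel X); split.
- exact: identity_channel_pmf.
- by apply: indep_zb_const; exact: identity_channel_pmf.
- by rewrite (eq_mutinfo pyz_identity).
Qed.

End OrthogonalInformation.

Theorem lemmaA1 (R : realType) (X Y D : finType) (p : X -> Y -> D -> R)
  (hp : is_pmf (fun t : X * Y * D => p t.1.1 t.1.2 t.2))
  (Bt U : finType) (f : D -> Bt) (qu : X -> Y -> D -> U -> R)
  (hqu : is_data_var qu) :
  is_domain_index p f qu ->
  is_Ix p f qu (entropy (px p)) /\ is_Iy p f (mutinfo (pyx p)).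
Proof.
have p_ge0 x y d : 0 <= p x y d := hp.1 (x, y, d).
have p_sum1 : \sum_x px p x = 1 by rewrite -hp.2 !sum_pair.
move=> [vx [vy [Ix_vx Iy_vy vmax]]].
have vx_le := is_Ix_le_entropy p_ge0 hqu Ix_vx.
have vy_le := is_Iy_le_mutinfo p_ge0 Iy_vy.
have attained := vmax _ _ _ _ (fun x _ _ => identity_channel_pmf x) _ _
  (is_Ix_const_identity p_ge0 p_sum1) (is_Iy_const p_ge0 p_sum1).
have -> : entropy (px p) = vx by lra.
have -> : mutinfo (pyx p) = vy by lra.
by split.
Qed.
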